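(* Let $\mathcal{A}=(A,B,s,t,\Delta)$ be a left multiplier bialgebroid with associated maps $\widetilde{T_\lambda},\widetilde{T_\rho}$. Regard $t$ as a homomorphism and $s$ as an anti-homomorphism from $B^{\mathrm{op}}$ to $M(A)$, let $\varsigma$ be the algebra isomorphism from the left target algebra $A\bar\times_BA$ of $\mathcal{A}$ onto the left target algebra $A\bar\times_{B^{\mathrm{op}}}A$ for $(A,B^{\mathrm{op}},t,s)$ induced by the flip $\Sigma\colon{}_BA\otimes A^B\to{}_{B^{\mathrm{op}}}A\otimes A^{B^{\mathrm{op}}}$, $a\otimes b\mapsto b\otimes a$ (i.e. $\varsigma(T)=\Sigma T\Sigma^{-1}$), and let $\Delta^{\mathrm{co}}=\varsigma\circ\Delta$. Then $\mathcal{A}^{\mathrm{co}}=(A,B^{\mathrm{op}},t,s,\Delta^{\mathrm{co}})$ is a left multiplier bialgebroid, and its associated maps are $\widetilde{T_\lambda}^{\mathrm{co}}=\Sigma\circ\widetilde{T_\rho}\circ\Sigma_{(A,A)}$ and $\widetilde{T_\rho}^{\mathrm{co}}=\Sigma\circ\widetilde{T_\lambda}\circ\Sigma_{(A,A)}$, where $\Sigma_{(A,A)}$ is the flip on $A\otimes A$.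
   Context: All algebras are associative complex algebras, not necessarily unital. For an algebra $A$ with $A_A$ non-degenerate (if $ab=0$ for all $b$ then $a=0$), $L(A)$ denotes the right $A$-module endomorphisms of $A$ (containing $A$ via left multiplication) and $M(A)=\{T\in L(A):aT\in A\ \forall a\}$. A left multiplier bialgebroid is a tuple $(A,B,s,t,\Delta)$ where: (i) $A,B$ are algebras, $A_A$ is non-degenerate and idempotent ($AA=A$); (ii) $s\colon B\to M(A)$ is a homomorphism and $t\colon B\to M(A)$ an anti-homomorphism with $s(x)t(y)=t(y)s(x)$, $s,t$ injective, $s(B)A=A=t(B)A$; ${}_BA\otimes A^B$, the quotient of $A\otimes A$ by the span of $s(x)a\otimes b-a\otimes t(x)b$, is non-degenerate as a right module over $A\otimes1$ and over $1\otimes A$; (iii) $\Delta$ is an algebra homomorphism into the algebra $A\bar\times_BA$ of linear endomorphisms $T$ of ${}_BA\otimes A^B$ such that for all $a,b\in A$ there are $T(a\otimes1),T(1\otimes b)\in{}_BA\otimes A^B$ with $T(a\otimes b)=T(a\otimes1)(1\otimes b)=T(1\otimes b)(a\otimes1)$; (iv) $\Delta(s(x)t(y)as(x')t(y'))=(t(y)\otimes s(x))\Delta(a)(t(y')\otimes s(x'))$ for $a\in A$, $x,y,x',y'\in B$; (v) for all $a,b,c\in A$: if $\Delta(b)(1\otimes c)=\sum_ip_i\otimes q_i$ and $\Delta(b)(a\otimes1)=\sum_ju_j\otimes v_j$, then $\sum_i\Delta(p_i)(a\otimes1)\otimes q_i=\sum_ju_j\otimes\Delta(v_j)(1\otimes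 c)$ in the quotient of $A^{\otimes3}$ by the span of $s(x)a\otimes b\otimes c-a\otimes t(x)b\otimes c$ and $a\otimes s(x)b\otimes c-a\otimes b\otimes t(x)c$. Its associated maps are $\widetilde{T_\lambda},\widetilde{T_\rho}\colon A\otimes A\to{}_BA\otimes A^B$, $\widetilde{T_\lambda}(a\otimes b)=\Delta(b)(a\otimes1)$, $\widetilde{T_\rho}(a\otimes b)=\Delta(a)(1\otimes b)$. *)

(* Left multiplier bialgebroids (Timmermann / Van Daele),
   formalized with tensor products presented by finite formal sums of
   simple tensors, identified via the universal property. *)
From HB Require Import structures.
From mathcomp Require Import all_boot all_algebra.
From mathcomp Require Import complex Rstruct.

Set Implicit Arguments.
Unset Strict Implicit.
Unset Printing Implicit Defensive.

Import GRing.Theory.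
Local Open Scope ring_scope.

Definition CC : fieldType := (Rdefinitions.R)[i].

Section NUAlg.
Variable K : fieldType.

Definition is_nualg (A : lmodType K) (mul : A -> A -> A) : Prop :=
  [/\ forall a b c, mul a (mul b c) = mul (mul a b) c,
      forall a b c, mul (a + b) c = mul a c + mul b c,
      forall a b c, mul a (b + c) = mul a b + mul a c,
      forall (k : K) a b, mul (k *: a) b = k *: mul a b &
      forall (k : K) a b, mul a (k *: b) = k *: mul a b].

Definition opmul (B : lmodType K) (mul : B -> B -> B) : B -> B -> B :=
  fun x y => mul y x.

End NUAlg.

Section LMB.
Variable K : fieldType.
Variables (A : lmodType K) (mulA : A -> A -> A).
Variables (B : lmodType K) (mulB : B -> B -> B).

Definition right_nondeg : Prop :=
  forall a : A, (forall b, mulA a b = 0) -> a = 0.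

Definition idempotent_alg : Prop :=
  forall a : A, exists l : seq (A * A), a = \sum_(p <- l) mulA p.1 p.2.

(* A multiplier in M(A): L is its action on the left of A (an element of
   L(A), i.e. a right A-module endomorphism), R a ↦ a T its action on the
   right (aT ∈ A is characterised by (aT) b = a (T b)). *)
Definition is_multiplier (L R : A -> A) : Prop :=
  [/\ forall a b, L (a + b) = L a + L b,
      forall (k : K) a, L (k *: a) = k *: L a,
      forall a b, L (mulA a b) = mulA (L a) b &
      forall a b, mulA (R a) b = mulA a (L b)].

(* f : B -> M(A) (left/right actions fL, fR) is a linear map into M(A) *)
Definition mult_linear (fL fR : B -> A -> A) : Prop :=
  [/\ forall x, is_multiplier (fL x) (fR x),
      forall x y a, fL (x + y) a = fL x a + fL y a &
      forall (k : K) x a, fL (k *: x) a = k *: fL x a].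

Definition mult_hom (fL fR : B -> A -> A) : Prop :=
  mult_linear fL fR /\ forall x y a, fL (mulB x y) a = fL x (fL y a).

Definition mult_antihom (fL fR : B -> A -> A) : Prop :=
  mult_linear fL fR /\ forall x y a, fL (mulB x y) a = fL y (fL x a).

Definition mult_injective (fL : B -> A -> A) : Prop :=
  forall x y, (forall a, fL x a = fL y a) -> x = y.

Definition mult_spans (fL : B -> A -> A) : Prop :=
  forall a : A, exists l : seq (B * A), a = \sum_(p <- l) fL p.1 p.2.

Variables (sL sR tL tR : B -> A -> A).

Definition balanced2 (V : lmodType K) (phi : A -> A -> V) : Prop :=
  [/\ forall a a' b, phi (a + a') b = phi a b + phi a' b,
      forall a b b', phi a (b + b') = phi a b + phi a b',
      forall (k : K) a b, phi (k *: a) b = k *: phi a b,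
      forall (k : K) a b, phi a (k *: b) = k *: phi a b &
      forall x a b, phi (sL x a) b = phi a (tL x b)].

(* equality in _B A ⊗ A^B of the formal sums  Σ p.1 ⊗ p.2 *)
Definition teq (l1 l2 : seq (A * A)) : Prop :=
  forall (V : lmodType K) (phi : A -> A -> V), balanced2 phi ->
    \sum_(p <- l1) phi p.1 p.2 = \sum_(p <- l2) phi p.1 p.2.

(* the threefold quotient of A ⊗ A ⊗ A *)
Definition balanced3 (V : lmodType K) (phi : A -> A -> A -> V) : Prop :=
  [/\ forall a a' b c, phi (a + a') b c = phi a b c + phi a' b c,
      forall a b b' c, phi a (b + b') c = phi a b c + phi a b' c &
      forall a b c c', phi a b (c + c') = phi a b c + phi a b c'] /\
  [/\ forall (k : K) a b c, phi (k *: a) b c = k *: phi a b c,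
      forall (k : K) a b c, phi a (k *: b) c = k *: phi a b c &
      forall (k : K) a b c, phi a b (k *: c) = k *: phi a b c] /\
  (forall x a b c, phi (sL x a) b c = phi a (tL x b) c) /\
  (forall x a b c, phi a (sL x b) c = phi a b (tL x c)).

Definition teq3 (l1 l2 : seq (A * A * A)) : Prop :=
  forall (V : lmodType K) (phi : A -> A -> A -> V), balanced3 phi ->
    \sum_(p <- l1) phi p.1.1 p.1.2 p.2 = \sum_(p <- l2) phi p.1.1 p.1.2 p.2.

Definition tscale (k : K) (l : seq (A * A)) := [seq (k *: p.1, p.2) | p <- l].
Definition ract1 (c : A) (l : seq (A * A)) := [seq (mulA p.1 c, p.2) | p <- l].
Definition ract2 (c : A) (l : seq (A * A)) := [seq (p.1, mulA p.2 c) | p <- l].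
Definition lmul2 (f g : A -> A) (l : seq (A * A)) := [seq (f p.1, g p.2) | p <- l].

Definition tensor_nondeg : Prop :=
  (forall l, (forall c, teq (ract1 c l) [::]) -> teq l [::]) /\
  (forall l, (forall c, teq (ract2 c l) [::]) -> teq l [::]).

(* T : endomorphism of formal sums inducing a linear endomorphism of
   _B A ⊗ A^B lying in the left target algebra A ×̄_B A *)
Definition in_ltarget (T : seq (A * A) -> seq (A * A)) : Prop :=
  [/\ forall l1 l2, teq l1 l2 -> teq (T l1) (T l2),
      forall l1 l2, teq (T (l1 ++ l2)) (T l1 ++ T l2),
      forall k l, teq (T (tscale k l)) (tscale k (T l)),
      (* T(a ⊗ 1) exists *)
      forall a, exists X, forall b, teq (T [:: (a, b)]) (ract2 b X) &
      (* T(1 ⊗ b) exists *)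
      forall b, exists Y, forall a, teq (T [:: (a, b)]) (ract1 a Y)].

Definition lteq (T T' : seq (A * A) -> seq (A * A)) : Prop :=
  forall l, teq (T l) (T' l).

Variable D : A -> seq (A * A) -> seq (A * A).

(* X represents  Δ(b)(a ⊗ 1) = T~_λ(a ⊗ b) *)
Definition TLrep (a b : A) (X : seq (A * A)) : Prop :=
  forall c, teq (D b [:: (a, c)]) (ract2 c X).
(* X represents  Δ(a)(1 ⊗ b) = T~_ρ(a ⊗ b) *)
Definition TRrep (a b : A) (X : seq (A * A)) : Prop :=
  forall c, teq (D a [:: (c, b)]) (ract1 c X).

Definition is_LMB : Prop :=
  [/\
      [/\ is_nualg mulA, is_nualg mulB, right_nondeg & idempotent_alg],
      [/\ mult_hom sL sR, mult_antihom tL tR &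
          forall x y a, sL x (tL y a) = tL y (sL x a)] /\
      [/\ mult_injective sL, mult_injective tL,
          mult_spans sL, mult_spans tL & tensor_nondeg],
      [/\ forall a, in_ltarget (D a),
          forall a b, lteq (D (a + b)) (fun l => D a l ++ D b l),
          forall (k : K) a, lteq (D (k *: a)) (fun l => tscale k (D a l)) &
          forall a b, lteq (D (mulA a b)) (fun l => D a (D b l))],
      forall x y x' y' a,
        lteq (D (tR y' (sR x' (sL x (tL y a)))))
             (fun l => lmul2 (tL y) (sL x) (D a (lmul2 (tL y') (sL x') l))) &
      (* (v) coassociativity, for all decompositions
         Δ(b)(1⊗c) = Σ p_i ⊗ q_i, Δ(b)(a⊗1) = Σ u_j ⊗ v_j,
         Δ(p_i)(a⊗1) = R_i, Δ(v_j)(1⊗c) = S_j *)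
      forall (a b c : A) (PR US : seq (A * A * seq (A * A))),
        TRrep b c [seq t.1 | t <- PR] ->
        TLrep a b [seq t.1 | t <- US] ->
        (forall t, t \in PR -> TLrep a t.1.1 t.2) ->
        (forall t, t \in US -> TRrep t.1.2 c t.2) ->
        teq3 (flatten [seq [seq (r.1, r.2, t.1.2) | r <- t.2] | t <- PR])
             (flatten [seq [seq (t.1.1, r.1, r.2) | r <- t.2] | t <- US])].

End LMB.

Definition tflip (K : fieldType) (A : lmodType K) (l : seq (A * A)) : seq (A * A) :=
  [seq (p.2, p.1) | p <- l].

Definition Dco (K : fieldType) (A : lmodType K) (D : A -> seq (A * A) -> seq (A * A))
  : A -> seq (A * A) -> seq (A * A) :=
  fun a l => tflip (D a (tflip l)).

(** Flipping tensor factors exchanges the roles of [s] and [t]: the flip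
    [Σ] identifies [_B A ⊗ A^B] with [_(B^op) A ⊗ A^(B^op)], so every axiom
    of [(A, B^op, t, s, Δ^co)] is the corresponding axiom of
    [(A, B, s, t, Δ)] conjugated by [Σ], with [T~_λ] and [T~_ρ] exchanged.
    The only axioms that do not transport verbatim are (iv), which needs the
    right actions of [s] and [t] on [A] to commute, and (v), in which the
    three tensor factors are reversed. *)
From HB Require Import structures.
From mathcomp Require Import all_boot all_algebra.

Set Implicit Arguments.
Unset Strict Implicit.
Unset Printing Implicit Defensive.
Import GRing.Theory.
Local Open Scope ring_scope.

Section Flip.
Variables (K : fieldType) (A B : lmodType K) (mulA : A -> A -> A).
Implicit Types (l : seq (A * A)) (sL tL : B -> A -> A).

Lemma tflipK : involutive (@tflip K A).
Proof.
by move=> l; rewrite /tflip -map_comp -[RHS]map_id; apply: eq_map => -[].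
Qed.

Lemma tflip_cat l1 l2 : tflip (l1 ++ l2) = tflip l1 ++ tflip l2.
Proof. exact: map_cat. Qed.

Lemma tflip_ract1 c l : tflip (ract1 mulA c l) = ract2 mulA c (tflip l).
Proof. by rewrite /tflip /ract1 /ract2 -!map_comp. Qed.

Lemma tflip_ract2 c l : tflip (ract2 mulA c l) = ract1 mulA c (tflip l).
Proof. by rewrite /tflip /ract1 /ract2 -!map_comp. Qed.

Lemma tflip_lmul2 f g l : tflip (lmul2 f g l) = lmul2 g f (tflip l).
Proof. by rewrite /tflip /lmul2 -!map_comp. Qed.

Lemma teq_trans sL tL l1 l2 l3 :
  teq sL tL l1 l2 -> teq sL tL l2 l3 -> teq sL tL l1 l3.
Proof. by move=> E1 E2 V phi bal; rewrite (E1 V phi bal) (E2 V phi bal). Qed.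

Lemma balanced2_flip sL tL (V : lmodType K) (phi : A -> A -> V) :
  balanced2 sL tL phi -> balanced2 tL sL (fun a b => phi b a).
Proof. by case=> h1 h2 h3 h4 h5; split=> *; rewrite ?h1 ?h2 ?h3 ?h4 ?h5. Qed.

Lemma teq_flip sL tL l1 l2 :
  teq tL sL l1 l2 -> teq sL tL (tflip l1) (tflip l2).
Proof.
move=> E V phi /balanced2_flip bal; rewrite /tflip !big_map.
exact: E V _ bal.
Qed.

Lemma teq_flipE sL tL l1 l2 :
  teq sL tL (tflip l1) (tflip l2) <-> teq tL sL l1 l2.
Proof.
split; last exact: teq_flip.
by move/(@teq_flip tL sL); rewrite !tflipK.
Qed.

Lemma teq_tflip_tscale sL tL k l :
  teq sL tL (tflip (tscale k l)) (tscale k (tflip l)).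
Proof.
move=> V phi [_ _ h3 h4 _]; rewrite /tflip /tscale -!map_comp !big_map.
by apply: eq_bigr => p _ /=; rewrite h3 h4.
Qed.

Definition trev3 (p : A * A * A) : A * A * A := (p.2, p.1.2, p.1.1).

Lemma teq3_rev sL tL (l1 l2 : seq (A * A * A)) :
  teq3 sL tL l1 l2 -> teq3 tL sL (map trev3 l1) (map trev3 l2).
Proof.
move=> E V phi [[p1 p2 p3] [[q1 q2 q3] [b1 b2]]]; rewrite !big_map.
apply: (E V (fun x y z => phi z y x)).
by split; [split|split; [split|split]] => *;
  rewrite ?p1 ?p2 ?p3 ?q1 ?q2 ?q3 ?b1 ?b2.
Qed.

End Flip.
Arguments trev3 {K A}.

Section CoRep.
Variables (K : fieldType) (A B : lmodType K) (mulA : A -> A -> A).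
Variables (sL tL : B -> A -> A) (D : A -> seq (A * A) -> seq (A * A)).

Lemma TLrep_co a b X :
  TLrep mulA tL sL (Dco D) a b X <-> TRrep mulA sL tL D b a (tflip X).
Proof.
by split=> E c; [move/teq_flipE: (E c) | apply/teq_flipE; move: (E c)];
  rewrite /Dco /= tflipK tflip_ract2.
Qed.

Lemma TRrep_co a b X :
  TRrep mulA tL sL (Dco D) a b X <-> TLrep mulA sL tL D b a (tflip X).
Proof.
by split=> E c; [move/teq_flipE: (E c) | apply/teq_flipE; move: (E c)];
  rewrite /Dco /= tflipK tflip_ract1.
Qed.

End CoRep.

Section CoAxioms.
Variables (K : fieldType) (A B : lmodType K).
Variables (mulA : A -> A -> A) (mulB : B -> B -> B).
Variables (sL sR tL tR : B -> A -> A).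
Implicit Types (T : seq (A * A) -> seq (A * A)) (fL fR : B -> A -> A).

Lemma is_nualg_opmul : is_nualg mulB -> is_nualg (opmul mulB).
Proof.
rewrite /opmul => -[h1 h2 h3 h4 h5].
by split=> *; rewrite ?h1 ?h2 ?h3 ?h4 ?h5.
Qed.

Lemma mult_hom_opmul fL fR :
  mult_antihom mulA mulB fL fR -> mult_hom mulA (opmul mulB) fL fR.
Proof. by case=> lin mulf; split=> // x y; apply: mulf. Qed.

Lemma mult_antihom_opmul fL fR :
  mult_hom mulA mulB fL fR -> mult_antihom mulA (opmul mulB) fL fR.
Proof. by case=> lin mulf; split=> // x y; apply: mulf. Qed.

Lemma tensor_nondeg_flip : tensor_nondeg mulA sL tL -> tensor_nondeg mulA tL sL.
Proof.
case=> nd1 nd2; split=> l H; apply/teq_flipE; [apply: nd2 | apply: nd1] => c;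
  by rewrite -?tflip_ract1 -?tflip_ract2; apply: teq_flip (H c).
Qed.

Definition tconj T l := tflip (T (tflip l)).

Lemma lteq_tconj T (T' : seq (A * A) -> seq (A * A)) :
  lteq sL tL T T' -> lteq tL sL (tconj T) (tconj T').
Proof. by move=> E l; apply: teq_flip. Qed.

Lemma in_ltarget_tconj T :
  in_ltarget mulA sL tL T -> in_ltarget mulA tL sL (tconj T).
Proof.
rewrite /tconj; case=> h1 h2 h3 h4 h5; split.
- by move=> l1 l2 /teq_flip E; apply: teq_flip; apply: h1.
- move=> l1 l2.
  rewrite [tflip (l1 ++ l2)]tflip_cat -[tflip (T _) ++ _]tflip_cat.
  exact: teq_flip (h2 _ _).
- move=> k l; apply: teq_trans (teq_flip (h1 _ _ (teq_tflip_tscale _ _))) _.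
  apply: teq_trans (teq_flip (h3 _ _)) _; exact: teq_tflip_tscale.
- move=> a; case: (h5 a) => Y HY; exists (tflip Y) => b.
  by rewrite -tflip_ract1; apply: teq_flip; apply: HY.
- move=> b; case: (h4 b) => X HX; exists (tflip X) => a.
  by rewrite -tflip_ract2; apply: teq_flip; apply: HX.
Qed.

(* Right actions are detected by multiplying on the right, so they inherit
   the commutation of the left actions through non-degeneracy of [A_A]. *)
Lemma multiplier_right_comm L1 R1 L2 R2 :
  is_nualg mulA -> right_nondeg mulA ->
  is_multiplier mulA L1 R1 -> is_multiplier mulA L2 R2 ->
  (forall a, L1 (L2 a) = L2 (L1 a)) -> forall a, R1 (R2 a) = R2 (R1 a).
Proof.
move=> [_ addl _ _ _] nd [_ _ _ r1] [_ _ _ r2] comm a.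
apply/eqP; rewrite -subr_eq0; apply/eqP; apply: nd => c.
have mulBl u v : mulA (u - v) c = mulA u c - mulA v c.
  by apply/eqP; rewrite eq_sym subr_eq -addl subrK.
by rewrite mulBl r1 r2 r2 r1 comm subrr.
Qed.

End CoAxioms.

Section CoCoassoc.
Variables (K : fieldType) (A B : lmodType K) (mulA : A -> A -> A).

Definition coassoc (sL tL : B -> A -> A) (D : A -> seq (A * A) -> seq (A * A))
  : Prop :=
  forall (a b c : A) (PR US : seq (A * A * seq (A * A))),
    TRrep mulA sL tL D b c [seq t.1 | t <- PR] ->
    TLrep mulA sL tL D a b [seq t.1 | t <- US] ->
    (forall t, t \in PR -> TLrep mulA sL tL D a t.1.1 t.2) ->
    (forall t, t \in US -> TRrep mulA sL tL D t.1.2 c t.2) ->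
    teq3 sL tL (flatten [seq [seq (r.1, r.2, t.1.2) | r <- t.2] | t <- PR])
               (flatten [seq [seq (t.1.1, r.1, r.2) | r <- t.2] | t <- US]).

(* The co-decompositions of [(a, b, c)] are, after flipping, the
   decompositions of [(c, b, a)] for [D], with the roles of [PR] and [US]
   exchanged. *)
Lemma coassoc_co sL tL D : coassoc sL tL D -> coassoc tL sL (Dco D).
Proof.
move=> coD a b c PR US /TRrep_co rPR /TLrep_co rUS tPR tUS.
pose flip_dec (t : A * A * seq (A * A)) := ((t.1.2, t.1.1), tflip t.2).
have fst_flip L : [seq t.1 | t <- map flip_dec L] = tflip [seq t.1 | t <- L].
  by rewrite /tflip -!map_comp.
have := coD c b a (map flip_dec US) (map flip_dec PR).
rewrite !fst_flip => /(_ rUS rPR).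
have /[swap]/[apply] :
    forall t, t \in map flip_dec US -> TLrep mulA sL tL D c t.1.1 t.2.
  by move=> _ /mapP [t Ht ->]; apply/TRrep_co; apply: tUS.
have /[swap]/[apply] :
    forall t, t \in map flip_dec PR -> TRrep mulA sL tL D t.1.2 a t.2.
  by move=> _ /mapP [t Ht ->]; apply/TLrep_co; apply: tPR.
have revUS (f : A * A * seq (A * A) -> A) L :
    map trev3
      (flatten [seq [seq (r.1, r.2, f t) | r <- t.2] | t <- map flip_dec L]) =
    flatten [seq [seq (f (flip_dec t), r.1, r.2) | r <- t.2] | t <- L].
  rewrite map_flatten -!map_comp; congr flatten; apply: eq_map => t /=.
  by rewrite /tflip -!map_comp; apply: eq_map => -[].
have revPR (f : A * A * seq (A * A) -> A) L :
    map trev3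
      (flatten [seq [seq (f t, r.1, r.2) | r <- t.2] | t <- map flip_dec L]) =
    flatten [seq [seq (r.1, r.2, f (flip_dec t)) | r <- t.2] | t <- L].
  rewrite map_flatten -!map_comp; congr flatten; apply: eq_map => t /=.
  by rewrite /tflip -!map_comp; apply: eq_map => -[].
move=> /teq3_rev; rewrite revUS revPR /= => E V phi bal.
by symmetry; apply: E.
Qed.

End CoCoassoc.

Theorem proposition2p7
  (A : lmodType CC) (mulA : A -> A -> A)
  (B : lmodType CC) (mulB : B -> B -> B)
  (sL sR tL tR : B -> A -> A) (D : A -> seq (A * A) -> seq (A * A)) :
  is_LMB mulA mulB sL sR tL tR D ->
  [/\ is_LMB mulA (opmul mulB) tL tR sL sR (Dco D),
      (* T~_λ^co = Σ ∘ T~_ρ ∘ Σ_(A,A) *)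
      forall (a b : A) (X : seq (A * A)),
        TRrep mulA sL tL D b a X -> TLrep mulA tL sL (Dco D) a b (tflip X) &
      (* T~_ρ^co = Σ ∘ T~_λ ∘ Σ_(A,A) *)
      forall (a b : A) (X : seq (A * A)),
        TLrep mulA sL tL D b a X -> TRrep mulA tL sL (Dco D) a b (tflip X)].
Proof.
move=> [[nuA nuB nd idem] [[sh th comm] [si ti ss ts tnd]]
        [inlt Dadd Dsc Dmul] Div coD].
split; first split.
- by split=> //; apply: is_nualg_opmul.
- split; split=> //;
    by [apply: mult_hom_opmul | apply: mult_antihom_opmul
       | apply: tensor_nondeg_flip].
- split=> [a | a b | k a | a b]; first exact: in_ltarget_tconj.
  + move=> l; move: (lteq_tconj (Dadd a b) l); by rewrite /tconj tflip_cat.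
  + move=> l; apply: teq_trans (lteq_tconj (Dsc k a) l) _.
    exact: teq_tflip_tscale.
  + by move=> l; move: (lteq_tconj (Dmul a b) l); rewrite /Dco /tconj tflipK.
- move=> x y x' y' a.
  have [[[sm _ _] _] [[tm _ _] _]] := (sh, th).
  rewrite (multiplier_right_comm nuA nd (sm y') (tm x')); last first.
    by move=> ?; rewrite comm.
  rewrite -comm => l; move: (lteq_tconj (Div y x y' x' a) l).
  by rewrite /Dco /tconj [tflip (lmul2 _ _ l)]tflip_lmul2 tflip_lmul2.
- exact: (@coassoc_co _ _ _ mulA sL tL D coD).
- by move=> a b X ?; apply/TLrep_co; rewrite tflipK.
- by move=> a b X ?; apply/TRrep_co; rewrite tflipK.
Qed.
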